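(* Consider the Normal Partizan Domination game on a star $K_{1,n}$ whose universal (center) vertex has color $C$, with $a$ leaves of color $A$, $b$ leaves of color $B$ and $c=n-a-b\geq 1$ leaves of color $C$, where $a+b\geq 1$. If $c$ is even, the value equals the value of the game on the star obtained by removing the $c$ leaves of color $C$. If $c$ is odd: if $a=b$ the value is $*$; if $|a-b|=1$ the value is $*2$; if $a\geq b+2$ the value is $\left\{0,\uparrow^{[a-b-1]}*\ \big|\ 0,\uparrow^{[a-b-1]}*\right\}$; if $b\geq a+2$ the value is $\left\{0,\downarrow_{[b-a-1]}*\ \big|\ 0,\downarrow_{[b-a-1]}*\right\}$.
   Context: Normal Partizan Domination game: a finite graph $G$ has each vertex colored $A$, $B$ or $C$. Alice and Bob alternately select a vertex; Alice may only select vertices colored $A$ or $C$, Bob only vertices colored $B$ or $C$. A vertex $u$ dominates $v$ if $u=v$ or $uv$ is an edge. A vertex may be selected only if it is playable, i.e. it dominates at least one vertex not dominated by the previously selected vertices; the game ends when the selected vertices form a dominating set. Under normal play the player unable to move loses. The game is regarded as a partizan combinatorial game with Alice as Left and Bob as Right, and its value is its value in Conway's combinatorial game theory ($\{X\mid Y\}$ has Left options $X$ and Right options $Y$; $G=H$ iff $G+(-H)$ is a second-player win). Notation: $*=\{0\mid 0\}$, $*2=\{0,*\mid 0,*\}$, $\uparrow=\{0\mid *\}$, $\downarrow=\{*\mid 0\}$; $\uparrow^{[1]}=\uparrow$, $\uparrow^{[m]}=\{\uparrow^{[m-1]}\mid *\}$ for $m\geq 2$; $\downarrow_{[1]}=\downarrow$,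 $\downarrow_{[m]}=\{*\mid \downarrow_{[m-1]}\}$ for $m\geq 2$; $J*$ denotes $J+*$. *)

From Stdlib Require Import List.
From mathcomp Require Import all_boot.
Set Implicit Arguments. Unset Strict Implicit. Unset Printing Implicit Defensive.

(** * Short combinatorial games (Conway), Left = Alice, Right = Bob *)
Inductive game : Type := Game : seq game -> seq game -> game.

Definition lefts (G : game) : seq game := let: Game l _ := G in l.
Definition rights (G : game) : seq game := let: Game _ r := G in r.

Fixpoint neg (G : game) : game :=
  match G with Game l r => Game (map neg r) (map neg l) end.

(** disjunctive sum: G + H = { G^L + H, G + H^L | G^R + H, G + H^R } *)
Fixpoint add (G H : game) {struct G} : game :=
  let fix addG (H : game) : game :=
    match H with Game hl hr =>
      match G with Game gl gr =>
        Game (map (fun g => add g H) gl ++ map addG hl)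
             (map (fun g => add g H) gr ++ map addG hr)
      end
    end in addG H.

(** Normal play: Left moving first wins iff some Left option is such that
    every Right option of it is again a Left-first win (and Right, having
    no move, loses). *)
Inductive left_first_wins : game -> Prop :=
  LFW G GL : List.In GL (lefts G) ->
    (forall GLR, List.In GLR (rights GL) -> left_first_wins GLR) ->
    left_first_wins G.

Inductive right_first_wins : game -> Prop :=
  RFW G GR : List.In GR (rights G) ->
    (forall GRL, List.In GRL (lefts GR) -> right_first_wins GRL) ->
    right_first_wins G.

Definition second_player_win (G : game) : Prop :=
  ~ left_first_wins G /\ ~ right_first_wins G.

Definition game_eq (G H : game) : Prop := second_player_win (add G (neg H)).

Definition zero : game := Game [::] [::].
Definition star : game := Game [:: zero] [:: zero].
Definition star2 : game := Game [:: zero; star] [:: zero; star].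
Definition up : game := Game [:: zero] [:: star].
Definition down : game := Game [:: star] [:: zero].

(** upn m = up^[m] for m >= 1 (up^[1] = up, up^[m] = {up^[m-1] | *});
    upn 0 is a meaningless junk value (= up). *)
Fixpoint upn (m : nat) : game :=
  match m with
  | 0 => up
  | S k => match k with 0 => up | _ => Game [:: upn k] [:: star] end
  end.

Fixpoint downn (m : nat) : game :=
  match m with
  | 0 => down
  | S k => match k with 0 => down | _ => Game [:: star] [:: downn k] end
  end.

Inductive color : Type := CA | CB | CC.

Definition isA (c : color) : bool := if c is CA then true else false.
Definition isB (c : color) : bool := if c is CB then true else false.
Definition isC (c : color) : bool := if c is CC then true else false.
Definition alice_col (c : color) : bool := ~~ isB c.
Definition bob_col (c : color) : bool := ~~ isA c.

Section Domination.
Variables (V : finType) (adj : rel V) (col : V -> color).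

Definition cnbhd (v : V) : {set V} := [set u | (u == v) || adj v u].

(** the game from position D (set of already dominated vertices); k is
    fuel: each move dominates at least one new vertex, so #|V| suffices. *)
Fixpoint dom_game_from (k : nat) (D : {set V}) : game :=
  match k with
  | 0 => Game [::] [::]
  | S k' =>
    Game [seq dom_game_from k' (D :|: cnbhd v)
           | v <- enum V & alice_col (col v) && ~~ (cnbhd v \subset D)]
         [seq dom_game_from k' (D :|: cnbhd v)
           | v <- enum V & bob_col (col v) && ~~ (cnbhd v \subset D)]
  end.

Definition dom_game : game := dom_game_from #|V| set0.
End Domination.

(** * Stars: leaves indexed by a finType L, center = None *)
Definition star_adj (L : finType) : rel (option L) :=
  fun x y => (x == None) != (y == None).

Definition star_col (L : finType) (col : L -> color) (v : option L) : color :=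
  if v is Some l then col l else CC.

Definition star_game (L : finType) (col : L -> color) : game :=
  dom_game (@star_adj L) (star_col col).

(* After the first move the centre is dominated, so every later position is determined by the
   numbers a, b, c of undominated A-, B- and C-leaves. Playing the centre dominates everything
   (option 0) and playing a leaf removes it, so the value G(a,b,c) satisfies
     G(a,b,c) = {0, G(a-1,b,c), G(a,b,c-1) | 0, G(a,b-1,c), G(a,b,c-1)}
   (absent options omitted), with G(0,0,0) = 0; the game from the empty position has the same
   options as G(a,b,c). A closed form depending only on the parity of c and on a - b satisfies this
   recursion: in each case its options occur among those of the recursion, and every other option
   is a gift horse (a Left option x with x <| G, or a Right option y with G <| y). Exchanging A and
   B negates all the games involved, so only a >= b needs checking. Finally {0, U | 0} = up^[k+1]*
   whenever U = up^[k]*, which identifies the closed forms with the values in the statement. *)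

From mathcomp Require Import all_boot zify.
Set Implicit Arguments. Unset Strict Implicit. Unset Printing Implicit Defensive.

(** * Conway's order on games *)

(* [gle G H] is G <= H and [glf G H] is G <| H ("less than or confused with"), i.e. not H <= G. *)
Inductive gle : game -> game -> Prop :=
| GleI G H : (forall x, List.In x (lefts G) -> glf x H) ->
             (forall y, List.In y (rights H) -> glf G y) -> gle G H
with glf : game -> game -> Prop :=
| GlfL G H x : List.In x (lefts H) -> gle G x -> glf G H
| GlfR G H y : List.In y (rights G) -> gle y H -> glf G H.

Definition eqv (G H : game) : Prop := gle G H /\ gle H G.

Fixpoint gsize (G : game) : nat :=
  match G with Game l r => (sumn (map gsize l) + sumn (map gsize r)).+1 end.

Lemma In_sumn (T : Type) (f : T -> nat) s x : List.In x s -> f x <= sumn (map f s).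
Proof. by elim: s => //= y s IH [->|/IH]; lia. Qed.

Lemma gsize_lefts G x : List.In x (lefts G) -> gsize x < gsize G.
Proof. by case: G => l r /= /(In_sumn gsize); lia. Qed.

Lemma gsize_rights G x : List.In x (rights G) -> gsize x < gsize G.
Proof. by case: G => l r /= /(In_sumn gsize); lia. Qed.

Lemma game_ind3 (P : game -> game -> game -> Prop) :
  (forall G H K, (forall G' H' K', gsize G' + gsize H' + gsize K' < gsize G + gsize H + gsize K ->
                    P G' H' K') -> P G H K) ->
  forall G H K, P G H K.
Proof.
move=> IH G H K; move: {2}(_ + _ + _) (leqnn (gsize G + gsize H + gsize K)) => n.
elim: n G H K => [|n IHn] G H K Hn; apply: IH => G' H' K' Hlt; first lia.
by apply: IHn; lia.
Qed.

Lemma game_ind2 (P : game -> game -> Prop) :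
  (forall G H, (forall G' H', gsize G' + gsize H' < gsize G + gsize H -> P G' H') -> P G H) ->
  forall G H, P G H.
Proof.
move=> IH G H; apply: (@game_ind3 (fun G H _ => P G H) _ G H zero) => {}G {}H K IHGH.
by apply: IH => G' H' lt; apply: (IHGH G' H' K); lia.
Qed.

Lemma game_ind1 (P : game -> Prop) :
  (forall G, (forall x, List.In x (lefts G) -> P x) ->
             (forall x, List.In x (rights G) -> P x) -> P G) ->
  forall G, P G.
Proof.
move=> IH G; apply: (@game_ind3 (fun G _ _ => P G) _ G G G) => {}G H K IHG.
apply: IH => x Hx; apply: (IHG x H K);
  [have := gsize_lefts Hx | have := gsize_rights Hx]; lia.
Qed.

Lemma In_map (T U : Type) (f : T -> U) s y :
  List.In y (map f s) <-> exists2 x, List.In x s & y = f x.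
Proof.
elim: s => [|x s IH] /=; first by split=> // -[].
rewrite IH; split=> [[<- | [z Hz ->]] | [z [<- | Hz] ->]].
- by exists x => //; left.
- by exists z => //; right.
- by left.
- by right; exists z.
Qed.

Lemma In_cat (T : Type) (s t : seq T) x : List.In x (s ++ t) <-> List.In x s \/ List.In x t.
Proof. by elim: s => [|y s IH] /=; [tauto | rewrite IH; tauto]. Qed.

Lemma In_mem (T : eqType) (x : T) s : List.In x s <-> x \in s.
Proof.
elim: s => [|y s IH] //=; rewrite in_cons; split.
- by case=> [-> | /IH ->]; rewrite ?eqxx ?orbT.
- by case/orP=> [/eqP -> | /IH]; auto.
Qed.

Lemma eq_In_map (T U : Type) (f g : T -> U) s :
  (forall x, List.In x s -> f x = g x) -> map f s = map g s.
Proof. by elim: s => //= x s IH fg; rewrite fg ?IH //; [move=> y Hy; apply: fg; right | left]. Qed.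

Lemma gle_refl G : gle G G.
Proof.
elim/game_ind1: G => G IHl IHr; constructor=> x Hx.
- exact: GlfL Hx (IHl x Hx).
- exact: GlfR Hx (IHr x Hx).
Qed.

Lemma glf_left x H : List.In x (lefts H) -> glf x H.
Proof. by move=> Hx; apply: GlfL Hx (gle_refl x). Qed.

Lemma glf_right G y : List.In y (rights G) -> glf G y.
Proof. by move=> Hy; apply: GlfR Hy (gle_refl y). Qed.

Lemma gle_lefts G H x : gle G H -> List.In x (lefts G) -> glf x H.
Proof. by case=> {}G {}H Hl _; apply: Hl. Qed.

Lemma gle_rights G H y : gle G H -> List.In y (rights H) -> glf G y.
Proof. by case=> {}G {}H _ Hr; apply: Hr. Qed.

Lemma glfE G H : glf G H <->
  (exists2 x, List.In x (lefts H) & gle G x) \/ (exists2 y, List.In y (rights G) & gle y H).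
Proof.
split=> [[{}G {}H x Hx Hgx | {}G {}H y Hy Hyh] | [[x Hx Hgx] | [y Hy Hyh]]].
- by left; exists x.
- by right; exists y.
- exact: GlfL Hx Hgx.
- exact: GlfR Hy Hyh.
Qed.

Lemma gle_trans_mutual G H K :
  [/\ gle G H -> gle H K -> gle G K,
      gle G H -> glf H K -> glf G K &
      glf G H -> gle H K -> glf G K].
Proof.
move: G H K; apply: game_ind3 => G H K IH.
split.
- move=> GH HK; constructor=> [x Hx|y Hy].
  + have [_ _ trans] := IH x H K ltac:(have := gsize_lefts Hx; lia).
    exact: trans (gle_lefts GH Hx) HK.
  + have [_ trans _] := IH G H y ltac:(have := gsize_rights Hy; lia).
    exact: trans GH (gle_rights HK Hy).
- move=> GH /glfE [[x Hx Hhx] | [y Hy Hyk]].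
  + have [trans _ _] := IH G H x ltac:(have := gsize_lefts Hx; lia).
    exact: GlfL Hx (trans GH Hhx).
  + have [_ _ trans] := IH G y K ltac:(have := gsize_rights Hy; lia).
    exact: trans (gle_rights GH Hy) Hyk.
- move=> /glfE [[x Hx Hgx] | [y Hy Hyh]] HK.
  + have [_ trans _] := IH G x K ltac:(have := gsize_lefts Hx; lia).
    exact: trans Hgx (gle_lefts HK Hx).
  + have [trans _ _] := IH y H K ltac:(have := gsize_rights Hy; lia).
    exact: GlfR Hy (trans Hyh HK).
Qed.

Lemma gle_trans G H K : gle G H -> gle H K -> gle G K.
Proof. by case: (gle_trans_mutual G H K). Qed.

Lemma eqv_refl G : eqv G G.
Proof. by split; apply: gle_refl. Qed.

Lemma eqv_sym G H : eqv G H -> eqv H G.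
Proof. by case. Qed.

Lemma eqv_trans G H K : eqv G H -> eqv H K -> eqv G K.
Proof. by case=> GH HG [HK KH]; split; apply: gle_trans; eassumption. Qed.

(* The gift horse principle: extra options no better than the position itself are harmless. *)
Lemma eqv_of_sub_options G H :
  List.incl (lefts H) (lefts G) -> List.incl (rights H) (rights G) ->
  (forall x, List.In x (lefts G) -> glf x H) -> (forall y, List.In y (rights G) -> glf H y) ->
  eqv G H.
Proof.
move=> subl subr GlH HlG; split; constructor=> // z Hz.
- exact/glf_right/subr.
- exact/glf_left/subl.
Qed.

Definition opts (s : bool) (G : game) : seq game := if s then lefts G else rights G.

Definition match_eqv (l r : seq game) : Prop :=
  (forall x, List.In x l -> exists2 y, List.In y r & eqv x y) /\
  (forall y, List.In y r -> exists2 x, List.In x l & eqv x y).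

Lemma eqv_of_match G H : (forall s, match_eqv (opts s G) (opts s H)) -> eqv G H.
Proof.
move=> M; have [[ML ML'] [MR MR']] := (M true, M false).
split; constructor.
- by move=> x /ML [y Hy [xy _]]; apply: GlfL Hy xy.
- by move=> y /MR' [x Hx [xy _]]; apply: GlfR Hx xy.
- by move=> y /ML' [x Hx [_ yx]]; apply: GlfL Hx yx.
- by move=> x /MR [y Hy [_ yx]]; apply: GlfR Hy yx.
Qed.

Lemma match_eqv_Forall2 l r : List.Forall2 eqv l r -> match_eqv l r.
Proof.
elim=> [|x y {}l {}r xy _ [IHl IHr]]; first by split=> ? [].
split=> z /= [<-|Hz].
- by exists y; [left|].
- by have [w Hw zw] := IHl z Hz; exists w; [right|].
- by exists x; [left|].
- by have [w Hw wz] := IHr z Hz; exists w; [right|].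
Qed.

Lemma eqv_Game l r l' r' :
  List.Forall2 eqv l l' -> List.Forall2 eqv r r' -> eqv (Game l r) (Game l' r').
Proof. by move=> /match_eqv_Forall2 Ml /match_eqv_Forall2 Mr; apply: eqv_of_match; case. Qed.

Lemma eqv_Game2 x y u v x' y' u' v' :
  eqv x x' -> eqv y y' -> eqv u u' -> eqv v v' ->
  eqv (Game [:: x; y] [:: u; v]) (Game [:: x'; y'] [:: u'; v']).
Proof. by move=> *; apply: eqv_Game; do 2!constructor=> //. Qed.

(** * Sums and negatives *)

Lemma lefts_add G H : lefts (add G H) = map (add^~ H) (lefts G) ++ map (add G) (lefts H).
Proof. by case: G; case: H. Qed.

Lemma rights_add G H : rights (add G H) = map (add^~ H) (rights G) ++ map (add G) (rights H).
Proof. by case: G; case: H. Qed.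

Lemma In_lefts_add G H z : List.In z (lefts (add G H)) <->
  (exists2 x, List.In x (lefts G) & z = add x H) \/ (exists2 x, List.In x (lefts H) & z = add G x).
Proof. by rewrite lefts_add In_cat !In_map. Qed.

Lemma In_rights_add G H z : List.In z (rights (add G H)) <->
  (exists2 y, List.In y (rights G) & z = add y H) \/
  (exists2 y, List.In y (rights H) & z = add G y).
Proof. by rewrite rights_add In_cat !In_map. Qed.

Lemma gle_add2r_mutual G H K :
  (gle G H -> gle (add G K) (add H K)) /\ (glf G H -> glf (add G K) (add H K)).
Proof.
move: G H K; apply: game_ind3 => G H K IH; split.
- move=> GH; constructor.
  + move=> _ /In_lefts_add [[x Hx ->] | [z Hz ->]].
    * have [_ mono] := IH x H K ltac:(have := gsize_lefts Hx; lia).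
      exact: mono (gle_lefts GH Hx).
    * have [mono _] := IH G H z ltac:(have := gsize_lefts Hz; lia).
      by apply: (GlfL _ (mono GH)); apply/In_lefts_add; right; exists z.
  + move=> _ /In_rights_add [[y Hy ->] | [z Hz ->]].
    * have [_ mono] := IH G y K ltac:(have := gsize_rights Hy; lia).
      exact: mono (gle_rights GH Hy).
    * have [mono _] := IH G H z ltac:(have := gsize_rights Hz; lia).
      by apply: (GlfR _ (mono GH)); apply/In_rights_add; right; exists z.
- move=> /glfE [[x Hx Gx] | [y Hy yH]].
  + have [mono _] := IH G x K ltac:(have := gsize_lefts Hx; lia).
    by apply: (GlfL _ (mono Gx)); apply/In_lefts_add; left; exists x.
  + have [mono _] := IH y H K ltac:(have := gsize_rights Hy; lia).
    by apply: (GlfR _ (mono yH)); apply/In_rights_add; left; exists y.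
Qed.

Lemma gle_add2r G H K : gle G H -> gle (add G K) (add H K).
Proof. by case: (gle_add2r_mutual G H K). Qed.

Lemma game_eta G : G = Game (lefts G) (rights G).
Proof. by case: G. Qed.

Lemma lefts_neg G : lefts (neg G) = map neg (rights G).
Proof. by case: G. Qed.

Lemma rights_neg G : rights (neg G) = map neg (lefts G).
Proof. by case: G. Qed.

Lemma negK G : neg (neg G) = G.
Proof.
elim/game_ind1: G => G IHl IHr; rewrite [LHS]game_eta [RHS]game_eta.
rewrite !(lefts_neg, rights_neg) -!map_comp.
by congr Game; rewrite -[RHS]map_id; apply: eq_In_map.
Qed.

Lemma neg_add G H : neg (add G H) = add (neg G) (neg H).
Proof.
move: G H; apply: game_ind2 => G H IH; rewrite [LHS]game_eta [RHS]game_eta.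
rewrite lefts_add rights_add !(lefts_neg, rights_neg) lefts_add rights_add !map_cat -!map_comp.
congr Game; congr (_ ++ _); apply: eq_In_map => x Hx /=; apply: IH.
all: by first [have := gsize_lefts Hx | have := gsize_rights Hx]; lia.
Qed.

Lemma gle_neg_mutual G H :
  (gle G H -> gle (neg H) (neg G)) /\ (glf G H -> glf (neg H) (neg G)).
Proof.
move: G H; apply: game_ind2 => G H IH; split.
- move=> GH; constructor.
  + move=> z; rewrite lefts_neg => /In_map [y Hy ->].
    have [_ anti] := IH G y ltac:(have := gsize_rights Hy; lia).
    exact: anti (gle_rights GH Hy).
  + move=> z; rewrite rights_neg => /In_map [x Hx ->].
    have [_ anti] := IH x H ltac:(have := gsize_lefts Hx; lia).
    exact: anti (gle_lefts GH Hx).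
- move=> /glfE [[x Hx Gx] | [y Hy yH]].
  + have [anti _] := IH G x ltac:(have := gsize_lefts Hx; lia).
    by apply: (GlfR _ (anti Gx)); rewrite rights_neg; apply/In_map; exists x.
  + have [anti _] := IH y H ltac:(have := gsize_rights Hy; lia).
    by apply: (GlfL _ (anti yH)); rewrite lefts_neg; apply/In_map; exists y.
Qed.

Lemma eqv_neg G H : eqv G H -> eqv (neg G) (neg H).
Proof. by case=> GH HG; split; apply: (gle_neg_mutual _ _).1. Qed.

Lemma eqv_addgN G : eqv (add G (neg G)) zero.
Proof.
elim/game_ind1: G => G IHl IHr; split; constructor=> //.
- move=> z /In_lefts_add [[x Hx ->] | [w]].
    apply: (GlfR _ (IHl x Hx).1); apply/In_rights_add; right.
    by exists (neg x); rewrite // rights_neg; apply/In_map; exists x.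
  rewrite lefts_neg => /In_map [y Hy ->] ->.
  by apply: (GlfR _ (IHr y Hy).1); apply/In_rights_add; left; exists y.
- move=> z /In_rights_add [[y Hy ->] | [w]].
    apply: (GlfL _ (IHr y Hy).2); apply/In_lefts_add; right.
    by exists (neg y); rewrite // lefts_neg; apply/In_map; exists y.
  rewrite rights_neg => /In_map [x Hx ->] ->.
  by apply: (GlfL _ (IHl x Hx).2); apply/In_lefts_add; left; exists x.
Qed.

Lemma le0_not_left_first_wins X : gle X zero -> ~ left_first_wins X.
Proof.
move=> X0 W; elim: W X0 => G GL HGL _ IH /gle_lefts /(_ HGL) /glfE [[? []] | [y Hy y0]].
exact: IH Hy y0.
Qed.

Lemma ge0_not_right_first_wins X : gle zero X -> ~ right_first_wins X.
Proof.
move=> X0 W; elim: W X0 => G GR HGR _ IH /gle_rights /(_ HGR) /glfE [[x Hx x0] | [? []]].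
exact: IH Hx x0.
Qed.

Lemma game_eq_of_eqv G H : eqv G H -> game_eq G H.
Proof.
case=> GH HG; have [HH0 H0H] := eqv_addgN H; split.
- exact/le0_not_left_first_wins/(gle_trans (gle_add2r _ GH)).
- exact/ge0_not_right_first_wins/(gle_trans H0H)/gle_add2r.
Qed.

Lemma eqv_addg0 G : eqv (add G zero) G.
Proof.
elim/game_ind1: G => -[l r] /= IHl IHr; rewrite !cats0.
apply: eqv_Game; [elim: l IHl | elim: r IHr] => //= x s IH Hs.
all: by constructor; [apply: Hs; left | apply: IH => y Hy; apply: Hs; right].
Qed.

Lemma eqv_add_star_star : eqv (add star star) zero.
Proof.
apply: eqv_of_sub_options => // x /= [<- | [<- | []]].
all: by [apply: glf_right; left | apply: glf_left; left].
Qed.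

(** * The up-star values *)

Definition zero_or (G : game) : game := Game [:: zero; G] [:: zero; G].

Fixpoint upstar (k : nat) : game :=
  if k is k'.+1 then Game [:: zero; upstar k'] [:: zero] else star.

Lemma neg_zero_or G : neg (zero_or G) = zero_or (neg G).
Proof. by []. Qed.

Lemma eqv_zero_or G H : eqv G H -> eqv (zero_or G) (zero_or H).
Proof. by move=> GH; apply: eqv_Game2 => //; apply: eqv_refl. Qed.

Ltac check_options :=
  let x := fresh "x" in
  move=> x /=; repeat case=> [<- | ];
  solve [ auto | apply: glf_left; simpl; auto | apply: glf_right; simpl; auto ].

(* [0 <= Y] makes the Right option [Y] dominated by [0], and the Left option [Y] reverses
   through its Right option [*] to the Left options of [*], i.e. to [0]. *)
Lemma eqv_drop_up_option X Y : rights Y = [:: star] ->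
  eqv (Game [:: X; Y] [:: zero; Y]) (Game [:: zero; X] [:: zero]).
Proof.
set G := Game [:: X; Y] [:: zero; Y]; set T := Game [:: zero; X] [:: zero].
move=> rY; have Y0 : gle zero Y by constructor=> //; rewrite rY; check_options.
have zG : glf zero G by apply: (@GlfL _ _ Y); [right; left | ].
have YT : glf Y T.
  by apply: (@GlfR _ _ star); [rewrite rY; left | constructor; check_options].
have TY : glf T Y by apply: (@GlfR _ _ zero); [left | ].
apply: (@eqv_trans _ (Game [:: zero; X; Y] [:: zero; Y])).
  by apply/eqv_sym/eqv_of_sub_options; check_options.
by apply: eqv_of_sub_options; check_options.
Qed.

Lemma add_star_up_step x X : eqv (add x star) X ->
  eqv (add (Game [:: x] [:: star]) star) (Game [:: zero; X] [:: zero]).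
Proof.
set Y := Game [:: x] [:: star] => xX; apply: eqv_trans (eqv_drop_up_option X (Y := Y) erefl).
have -> : add Y star = Game [:: add x star; add Y zero] [:: add star star; add Y zero] by [].
by apply: eqv_Game2 => //; [exact: eqv_addg0 | exact: eqv_add_star_star | exact: eqv_addg0].
Qed.

Lemma upstar_upn k : eqv (upstar k.+1) (add (upn k.+1) star).
Proof.
apply: eqv_sym; elim: k => [|k IH]; apply: add_star_up_step => //.
exact: eqv_refl.
Qed.

Lemma neg_upn k : neg (upn k) = downn k.
Proof. by elim: k => // -[|k] //= ->. Qed.

(** * Values of the star positions *)

(* The value when Alice has k + 1 more undominated leaves than Bob, for the given parity of c. *)
Definition lead_value (odd_c : bool) (k : nat) : game :=
  if odd_c then zero_or (upstar k) else upstar k.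

Definition star_value (a b c : nat) : game :=
  if a + b + c == 0 then zero
  else if a == b then (if odd c then star else star2)
  else if b < a then lead_value (odd c) (a - b).-1
  else neg (lead_value (odd c) (b - a).-1).

Lemma star_value_lead a b c k : a = (k + b).+1 -> star_value a b c = lead_value (odd c) k.
Proof.
move=> ->; rewrite /star_value.
have [-> -> ->] : [/\ (k + b).+1 + b + c == 0 = false, ((k + b).+1 == b) = false & b < (k + b).+1].
  by split; lia.
by have -> : ((k + b).+1 - b).-1 = k by lia.
Qed.

Lemma star_value_diag a c : 0 < a + c -> star_value a a c = if odd c then star else star2.
Proof. by move=> ac; rewrite /star_value eqxx ifN //; lia. Qed.

Lemma star_value_even a b c : 0 < a + b -> ~~ odd c -> star_value a b c = star_value a b 0.
Proof.
move=> ab ec; rewrite /star_value (negbTE ec).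
by have [-> ->] : (a + b + c == 0) = false /\ (a + b + 0 == 0) = false by split; lia.
Qed.

Lemma neg_star_value a b c : neg (star_value a b c) = star_value b a c.
Proof.
rewrite /star_value (addnC b) [b == a]eq_sym.
case: ifP => // _; case: (eqVneq a b) => [_ | ab]; first by case: (odd c).
by case: ltngtP ab => // _ _; rewrite negK.
Qed.

(* The right-hand side of the recursion for G(a,b,c), with [star_value] in place of G. *)
Definition star_rec (a b c : nat) : game :=
  let c_moves := if c is c'.+1 then [:: star_value a b c'] else [::] in
  Game (zero :: (if a is a'.+1 then [:: star_value a' b c] else [::]) ++ c_moves)
       (zero :: (if b is b'.+1 then [:: star_value a b' c] else [::]) ++ c_moves).

Lemma neg_star_rec a b c : neg (star_rec a b c) = star_rec b a c.
Proof. by case: a b c => [|a] [|b] [|c]; rewrite /= ?neg_star_value. Qed.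

Lemma In_star_rec s a b c x :
  List.In x (opts s (star_rec a b c)) <->
  x = zero \/
  (if s then 0 < a else 0 < b) /\ x = (if s then star_value a.-1 b c else star_value a b.-1 c) \/
  0 < c /\ x = star_value a b c.-1.
Proof.
by case: s; case: a b c => [|a] [|b] [|c] /=; intuition (subst; auto).
Qed.

Lemma glf_zero_lead p k : glf zero (lead_value p k).
Proof. by apply: glf_left; case: p; case: k => *; left. Qed.

Lemma glf_lead_zero p k : glf (lead_value p k) zero.
Proof. by apply: glf_right; case: p; case: k => *; left. Qed.

Lemma glf_lead_succ p k : glf (lead_value p k) (lead_value p k.+1).
Proof.
case: p; last by apply: glf_left; right; left.
by apply: (@GlfL _ _ (upstar k.+1)); [right; left | constructor; check_options].
Qed.

Lemma glf_lead_flip p k : glf (lead_value p k) (lead_value (~~ p) k).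
Proof. by case: p; [apply: glf_right | apply: glf_left]; right; left. Qed.

Lemma In_lefts_lead p k x : List.In x (lefts (lead_value p k)) ->
  x = zero \/ (x = lead_value (~~ p) k /\ p) \/ (x = lead_value p k.-1 /\ ~~ p /\ 0 < k).
Proof. by case: p; case: k => [|k] /=; intuition (subst; auto). Qed.

Lemma In_rights_lead p k x : List.In x (rights (lead_value p k)) ->
  x = zero \/ (x = lead_value (~~ p) k /\ p).
Proof. by case: p; case: k => [|k] /=; intuition (subst; auto). Qed.

Lemma odd_pred n : 0 < n -> odd n.-1 = ~~ odd n.
Proof. by move=> n0; rewrite -{2}(prednK n0) oddS negbK. Qed.

Lemma star_rec_lead a b c k : a = (k + b).+1 -> eqv (star_rec a b c) (lead_value (odd c) k).
Proof.
move=> Ha.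
have a_move : 0 < k -> star_value a.-1 b c = lead_value (odd c) k.-1.
  by move=> k0; apply: star_value_lead; lia.
have b_move : 0 < b -> star_value a b.-1 c = lead_value (odd c) k.+1.
  by move=> b0; apply: star_value_lead; lia.
have c_move : 0 < c -> star_value a b c.-1 = lead_value (~~ odd c) k.
  by move=> c0; rewrite (star_value_lead _ Ha) odd_pred.
have prev : glf (star_value a.-1 b c) (lead_value (odd c) k).
  case: (posnP k) => [k0 | k0]; last by rewrite a_move // -{2}(prednK k0); apply: glf_lead_succ.
  have -> : a.-1 = b by lia.
  rewrite k0; case: (posnP (b + c)) => [bc | bc].
    have [-> ->] : b = 0 /\ c = 0 by lia.
    exact: glf_zero_lead.
  by rewrite star_value_diag //; case: (odd c); [apply: glf_left | apply: glf_right]; right; left.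
apply: eqv_of_sub_options.
- move=> x /In_lefts_lead [-> | [[-> oc] | [-> [_ k0]]]]; apply/(In_star_rec true).
  + by left.
  + by right; right; rewrite c_move ?odd_gt0.
  + by right; left; rewrite a_move // Ha.
- move=> y /In_rights_lead [-> | [-> oc]]; apply/(In_star_rec false).
  + by left.
  + by right; right; rewrite c_move ?odd_gt0.
- move=> x /(In_star_rec true) [-> | [[_ ->] | [c0 ->]]]; [exact: glf_zero_lead | exact: prev | ].
  by rewrite c_move // -{2}(negbK (odd c)); apply: glf_lead_flip.
- move=> y /(In_star_rec false) [-> | [[b0 ->] | [c0 ->]]]; first exact: glf_lead_zero.
    by rewrite b_move //; apply: glf_lead_succ.
  by rewrite c_move //; apply: glf_lead_flip.
Qed.

Lemma star_rec_diag a c : 0 < a + c -> eqv (star_rec a a c) (if odd c then star else star2).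
Proof.
move=> ac; set other := if odd c then star2 else star.
have side_move s : 0 < a -> (if s then star_value a.-1 a c else star_value a a.-1 c) = other.
  have lead0 : lead_value (odd c) 0 = other by rewrite /other; case: (odd c).
  move=> a0; case: s; last by rewrite (@star_value_lead _ _ _ 0) //; lia.
  by rewrite -neg_star_value (@star_value_lead _ _ _ 0) ?lead0 /other; [case: (odd c) | lia].
have opt s x : List.In x (opts s (star_rec a a c)) -> x = zero \/ x = other.
  move/In_star_rec => [-> | [[a0 ->] | [c0 ->]]]; first by left.
    by right; apply: side_move; case: s a0.
  case: (posnP (a + c.-1)) => [ac0 | ac0].
    have [-> ->] : a = 0 /\ c.-1 = 0 by lia.
    by left.
  by right; rewrite star_value_diag // odd_pred // /other; case: (odd c).
have star_opt s : ~~ odd c -> List.In star (opts s (star_rec a a c)).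
  move=> ec; apply/In_star_rec; right.
  case: (posnP a) => [a0 | a0].
    have c1 : c != 1 by apply: contraNneq ec => ->.
    right; split; first lia.
    rewrite star_value_diag ?odd_pred ?ec //; lia.
  by left; split; [case: s | rewrite side_move // /other (negbTE ec)].
have target_opts s : List.incl (opts s (if odd c then star else star2)) (opts s (star_rec a a c)).
  have zero_opt : List.In zero (opts s (star_rec a a c)) by apply/In_star_rec; left.
  move=> x; case: ifP => oc.
    by rewrite (_ : opts s star = [:: zero]); [case=> [<- | []] | case: (s)].
  rewrite (_ : opts s star2 = [:: zero; star]); last by case: (s).
  by case=> [<- | [<- | []]]; last exact/star_opt/negbT.
apply: eqv_of_sub_options; [exact: (target_opts true) | exact: (target_opts false) | | ].
- move=> x /(opt true) [-> | ->].
    by apply: glf_left; case: (odd c); left.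
  by rewrite /other; case: (odd c); [apply: glf_right | apply: glf_left]; right; left.
- move=> y /(opt false) [-> | ->].
    by apply: glf_right; case: (odd c); left.
  by rewrite /other; case: (odd c); [apply: glf_left | apply: glf_right]; right; left.
Qed.

Lemma star_rec_value a b c : 0 < a + b + c -> eqv (star_rec a b c) (star_value a b c).
Proof.
case: (ltngtP a b) => [ab | ba | <-] abc.
- rewrite -[star_rec a b c]negK neg_star_rec -neg_star_value; apply: eqv_neg.
  by rewrite (@star_value_lead _ _ _ (b - a).-1); [apply: star_rec_lead | ]; lia.
- by rewrite (@star_value_lead _ _ _ (a - b).-1); [apply: star_rec_lead | ]; lia.
- by rewrite star_value_diag; [apply: star_rec_diag | ]; lia.
Qed.

(** * The domination game on a star *)

Lemma card_colors (L : finType) (col : L -> color) :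
  #|[pred l | isA (col l)]| + #|[pred l | isB (col l)]| + #|[pred l | isC (col l)]| = #|L|.
Proof.
have E p : #|[pred l | p (col l)]| = \sum_(l : L) (p (col l) : nat).
  by rewrite -sum1_card big_mkcond; apply: eq_bigr => l _; rewrite inE; case: (p _).
by rewrite !E -!big_split -sum1_card; apply: eq_bigr => l _; case: (col l).
Qed.

Section StarGame.
Variables (L : finType) (col : L -> color).
Local Notation dg := (dom_game_from (@star_adj L) (star_col col)).
Local Notation N := (cnbhd (@star_adj L)).

Lemma cnbhd_center : N None = setT.
Proof. by apply/setP => u; rewrite !inE /star_adj /=; case: u. Qed.

Lemma cnbhd_leaf l : N (Some l) = [set Some l; None].
Proof. by apply/setP => u; rewrite !inE /star_adj /=; case: u. Qed.

Definition side_col (s : bool) : color -> bool := if s then alice_col else bob_col.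

Lemma In_dom_game s k (D : {set option L}) x : List.In x (opts s (dg k.+1 D)) <->
  exists v, [/\ side_col s (star_col col v), ~~ (N v \subset D) & x = dg k (D :|: N v)].
Proof.
have -> : opts s (dg k.+1 D) = [seq dg k (D :|: N v) | v <- enum {: option L} &
                                  side_col s (star_col col v) && ~~ (N v \subset D)] by case: s.
rewrite In_map; split=> [[v /In_mem] | [v [cv pv ->]]].
- by rewrite mem_filter => /andP [/andP [cv pv] _] ->; exists v; split.
- by exists v => //; apply/In_mem; rewrite mem_filter cv pv mem_enum.
Qed.

Lemma dom_game_dominated k (D : {set option L}) : (forall v, N v \subset D) -> dg k D = zero.
Proof.
move=> dom; case: k => //= k.
by rewrite !(@eq_filter _ _ pred0) ?filter_pred0 // => v; rewrite dom andbF.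
Qed.

Definition free_leaves (p : color -> bool) (D : {set option L}) : nat :=
  #|[pred l | p (col l) && (Some l \notin D)]|.

Lemma free_leaves_dominate p (D : {set option L}) l : Some l \notin D ->
  free_leaves p D = p (col l) + free_leaves p (D :|: N (Some l)).
Proof.
move=> Dl; rewrite /free_leaves (cardD1 l) inE /= Dl andbT cnbhd_leaf; congr (_ + _).
apply: eq_card => l'; rewrite !inE; case: (eqVneq l' l) => [-> | ne] /=.
  by rewrite eqxx orbT andbF.
by rewrite (inj_eq (@Some_inj _)) (negbTE ne) orbF.
Qed.

Lemma free_leafP p (D : {set option L}) :
  0 < free_leaves p D -> exists2 l, p (col l) & Some l \notin D.
Proof. by case/card_gt0P => l; rewrite inE => /andP [pl Dl]; exists l. Qed.

Lemma leaf_playable (D : {set option L}) l : Some l \notin D -> ~~ (N (Some l) \subset D).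
Proof. by apply: contra => /subsetP; apply; rewrite cnbhd_leaf !inE eqxx. Qed.

Lemma playable_leaf_free (D : {set option L}) l :
  None \in D -> ~~ (N (Some l) \subset D) -> Some l \notin D.
Proof.
move=> DN; apply: contra => Dl; apply/subsetP => u.
by rewrite cnbhd_leaf !inE => /orP [] /eqP ->.
Qed.

Local Notation fA D := (free_leaves isA D).
Local Notation fB D := (free_leaves isB D).
Local Notation fC D := (free_leaves isC D).

Definition leaf_value (D : {set option L}) (l : L) : game :=
  star_value (fA D - isA (col l)) (fB D - isB (col l)) (fC D - isC (col l)).

Lemma In_star_rec_leaf s (D : {set option L}) l : side_col s (col l) -> Some l \notin D ->
  List.In (leaf_value D l) (opts s (star_rec (fA D) (fB D) (fC D))).
Proof.
move=> sl Dl; rewrite /leaf_value !(free_leaves_dominate _ Dl); apply/In_star_rec; right.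
by case: s sl; case: (col l) => //= _; rewrite ?subn1 ?subn0 ?addKn; [left | right | left | right].
Qed.

Lemma star_rec_leafP s (D : {set option L}) y :
  List.In y (opts s (star_rec (fA D) (fB D) (fC D))) ->
  y = zero \/ exists2 l, side_col s (col l) && (Some l \notin D) & y = leaf_value D l.
Proof.
move/In_star_rec => [-> | [[ab0 ->] | [c0 ->]]]; [by left | right | right].
- case: s ab0 => ab0; have [l pl Dl] := free_leafP ab0; exists l; rewrite ?Dl ?andbT /leaf_value;
    by case: (col l) pl => //= _; rewrite ?subn1 ?subn0.
- have [l pl Dl] := free_leafP c0; exists l; rewrite ?Dl ?andbT /leaf_value.
    by case: s; case: (col l) pl.
  by case: (col l) pl => //= _; rewrite ?subn1 ?subn0.
Qed.

Lemma dom_game_value k (D : {set option L}) : None \in D -> fA D + fB D + fC D < k ->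
  eqv (dg k D) (star_value (fA D) (fB D) (fC D)).
Proof.
elim: k D => // k IH D DN fuel.
have leaf_move l : Some l \notin D -> eqv (dg k (D :|: N (Some l))) (leaf_value D l).
  move=> Dl; rewrite /leaf_value !(free_leaves_dominate _ Dl) !addKn.
  apply: IH; first by rewrite inE DN.
  by move: fuel; rewrite !(free_leaves_dominate _ Dl); case: (col l) => /=; lia.
have center_move : dg k (D :|: N None) = zero.
  by rewrite cnbhd_center setUT dom_game_dominated // => v; apply: subsetT.
case: (pickP (fun l => Some l \notin D)) => [l0 Dl0 | Dfull]; last first.
  have none p : free_leaves p D = 0 by apply: eq_card0 => l; rewrite inE Dfull andbF.
  rewrite !none dom_game_dominated; first exact: eqv_refl.
  by case=> [l|]; apply/subsetP => -[l'|] _ //; apply/negPn; rewrite Dfull.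
have abc : 0 < fA D + fB D + fC D.
  by rewrite !(free_leaves_dominate _ Dl0); case: (col l0) => /=; lia.
apply: eqv_trans (star_rec_value abc); apply: eqv_of_match => s; split.
- move=> x /In_dom_game [[l|] [sv pv ->]].
    have Dl := playable_leaf_free DN pv.
    by exists (leaf_value D l); [apply: In_star_rec_leaf | apply: leaf_move].
  by exists zero; [apply/In_star_rec; left | rewrite center_move; apply: eqv_refl].
- move=> y /star_rec_leafP [-> | [l /andP [sl Dl] ->]].
    exists (dg k (D :|: N None)); last by rewrite center_move; apply: eqv_refl.
    apply/In_dom_game; exists None; split=> //; first by case: s.
    by rewrite cnbhd_center; apply: contra Dl0 => /subsetP; apply.
  exists (dg k (D :|: N (Some l))); last exact: leaf_move.
  by apply/In_dom_game; exists (Some l); split=> //; apply: leaf_playable.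
Qed.

Lemma dom_game_start k : 0 < #|L| -> dg k.+1 set0 = dg k.+1 [set None].
Proof.
case/card_gt0P => l0 _.
have dom v : set0 :|: N v = [set None] :|: N v.
  rewrite set0U; apply/esym/setUidPr; rewrite sub1set.
  by case: v => [l|]; rewrite ?cnbhd_leaf ?cnbhd_center !inE ?orbT.
have playable v : (N v \subset set0) = (N v \subset [set None]).
  have [u vu uN] : exists2 u, u \in N v & u != None.
    by case: v => [l|]; [exists (Some l) | exists (Some l0)];
      rewrite ?cnbhd_leaf ?cnbhd_center ?inE ?eqxx.
  by apply/idP/idP => /subsetP /(_ u vu); rewrite !inE ?(negbTE uN).
have opts_eq (p : pred (option L)) :
    [seq dg k (set0 :|: N v) | v <- enum {: option L} & p v && ~~ (N v \subset set0)] =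
    [seq dg k ([set None] :|: N v) | v <- enum {: option L} & p v && ~~ (N v \subset [set None])].
  rewrite (@eq_filter _ _ (fun v => p v && ~~ (N v \subset [set None]))) => [|v].
    by apply: eq_map => v; rewrite dom.
  by rewrite playable.
by rewrite /=; congr Game; apply: opts_eq.
Qed.

Lemma star_game_value : 0 < #|L| ->
  eqv (star_game col)
      (star_value #|[pred l | isA (col l)]| #|[pred l | isB (col l)]| #|[pred l | isC (col l)]|).
Proof.
move=> L0; rewrite /star_game /dom_game card_option dom_game_start //.
have free p : free_leaves p [set None] = #|[pred l | p (col l)]|.
  by apply: eq_card => l; rewrite !inE andbT.
rewrite -!free; apply: dom_game_value; first by rewrite inE.
by rewrite !free card_colors.
Qed.
End StarGame.

Lemma card_sig_sub (T : finType) (q p : pred T) :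
  {subset p <= q} -> #|[pred x : {i | q i} | p (val x)]| = #|p|.
Proof.
move=> pq; rewrite -(card_image val_inj); apply: eq_card => i.
apply/imageP/idP => [[x px ->] // | pi].
by exists (exist _ i (pq _ pi)).
Qed.

Lemma star_game_drop_C (L : finType) (col : L -> color) :
  0 < #|[pred l | isA (col l)]| + #|[pred l | isB (col l)]| -> ~~ odd #|[pred l | isC (col l)]| ->
  eqv (star_game col) (star_game (fun x : {l | ~~ isC (col l)} => col (val x))).
Proof.
move=> ab ec; set col' := fun x : {l | ~~ isC (col l)} => col (val x).
have count p : {subset [pred l | p (col l)] <= [pred l | ~~ isC (col l)]} ->
    #|[pred x | p (col' x)]| = #|[pred l | p (col l)]|.
  exact: (card_sig_sub (p := [pred l | p (col l)])).
have cA : #|[pred x | isA (col' x)]| = #|[pred l | isA (col l)]|.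
  by apply: count => l; rewrite !inE; case: (col l).
have cB : #|[pred x | isB (col' x)]| = #|[pred l | isB (col l)]|.
  by apply: count => l; rewrite !inE; case: (col l).
have cC : #|[pred x | isC (col' x)]| = 0.
  by apply: eq_card0 => -[l Cl]; rewrite inE /=; apply: negbTE.
have L0 : 0 < #|L| by rewrite -(card_colors col); lia.
have L'0 : 0 < #|{: {l | ~~ isC (col l)}}| by rewrite -(card_colors col') cA cB cC addn0.
apply: eqv_trans (star_game_value col L0) _; apply/eqv_sym.
apply: eqv_trans (star_game_value col' L'0) _; rewrite cA cB cC -(star_value_even ab ec).
exact: eqv_refl.
Qed.

Theorem theorem9 (n : nat) (col : 'I_n -> color) :
  let a := #|[pred i | isA (col i)]| in
  let b := #|[pred i | isB (col i)]| in
  let c := #|[pred i | isC (col i)]| in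
  (1 <= c)%N -> (1 <= a + b)%N ->
  (~~ odd c ->
     game_eq (star_game col)
       (star_game (fun x : {i : 'I_n | ~~ isC (col i)} => col (val x)))) /\
  (odd c ->
     (a = b -> game_eq (star_game col) star) /\
     ((a == b.+1) || (b == a.+1) -> game_eq (star_game col) star2) /\
     ((b + 2 <= a)%N ->
        game_eq (star_game col)
          (Game [:: zero; add (upn (a - b - 1)) star]
                [:: zero; add (upn (a - b - 1)) star])) /\
     ((a + 2 <= b)%N ->
        game_eq (star_game col)
          (Game [:: zero; add (downn (b - a - 1)) star]
                [:: zero; add (downn (b - a - 1)) star]))).
Proof.
move=> a b c _ ab1; split=> [ec | oc]; first exact/game_eq_of_eqv/star_game_drop_C.
have value : eqv (star_game col) (star_value a b c).
  by apply: star_game_value; rewrite -(card_colors col) -/a -/b -/c; lia.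
split; [move=> eab | split; [case/orP => /eqP eab | split=> [ba | ab]]].
- by apply: game_eq_of_eqv; rewrite -eab star_value_diag ?oc in value; [ | lia].
- by apply: game_eq_of_eqv; rewrite (@star_value_lead _ _ _ 0) /lead_value ?oc in value.
- by apply: game_eq_of_eqv;
    rewrite -neg_star_value (@star_value_lead _ _ _ 0) /lead_value ?oc in value.
- have -> : a - b - 1 = (a - b - 2).+1 by lia.
  rewrite (@star_value_lead _ _ _ (a - b - 2).+1) /lead_value ?oc in value; last by lia.
  exact/game_eq_of_eqv/(eqv_trans value)/eqv_zero_or/upstar_upn.
- have -> : b - a - 1 = (b - a - 2).+1 by lia.
  rewrite -neg_star_value (@star_value_lead _ _ _ (b - a - 2).+1) /lead_value ?oc in value;
    last by lia.
  set k := (b - a - 2).+1.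
  have -> : Game [:: zero; add (downn k) star] [:: zero; add (downn k) star] =
            neg (zero_or (add (upn k) star)) by rewrite neg_zero_or neg_add neg_upn.
  exact/game_eq_of_eqv/(eqv_trans value)/eqv_neg/eqv_zero_or/upstar_upn.
Qed.
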